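(* Let $G$ be a topological group. (i) Let $X$ be a discrete space with a continuous $G$-action and $c:G\times X\to\mathbf S^1$ a continuous cocycle. Then the representation $\lambda_X^c$ of $G$ on $\ell_2(X)$ is unitarily equivalent to a direct sum of monomial representations $\mathrm{Ind}_H^G\chi$ associated to open subgroups $H$ of $G$ (and unitary characters $\chi$ of $H$). (ii) Let $\pi=\bigoplus_{i\in I}\mathrm{Ind}_{H_i}^G\chi_i$ be a direct sum of monomial representations associated to open subgroups $H_i$ of $G$ and unitary characters $\chi_i$ of $H_i$. Let $X=\coprod_{i\in I}G/H_i$ with the natural $G$-action. Then $\pi$ is unitarily equivalent to $\lambda_X^c$ for some cocycle $c:G\times X\to\mathbf S^1$.
   Context: An action of $G$ on a discrete space $X$ is continuous iff all point stabilizers are open. A cocycle $c:G\times X\to\mathbf S^1$ satisfies $c(g_1g_2,x)=c(g_1,g_2x)c(g_2,x)$ for all $g_1,g_2\in G$, $x\in X$. The twisted permutation representation $\lambda_X^c$ on $\ell_2(X)$ is $\lambda_X^c(g)f(x)=c(g^{-1},x)f(g^{-1}x)$. A monomial representation is an induced representation $\mathrm{Ind}_H^G\chi$ with $\chi:H\to\mathbf S^1$ a (continuous) unitary character. *)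

From HB Require Import structures.
From mathcomp Require Import all_boot all_order all_algebra.
From mathcomp Require Import all_classical all_reals all_analysis.
From mathcomp Require Export complex.
Set Implicit Arguments. Unset Strict Implicit. Unset Printing Implicit Defensive.
Import Order.TTheory GRing.Theory Num.Theory.
Import numFieldNormedType.Exports.
Local Open Scope classical_set_scope.
Local Open Scope ring_scope.

Section TopGroup.
Variable G : Type.
Variables (mul : G -> G -> G) (inv : G -> G) (one : G).

Definition is_group :=
  [/\ forall x y z, mul x (mul y z) = mul (mul x y) z,
      forall x, mul one x = x, forall x, mul x one = x,
      forall x, mul (inv x) x = one & forall x, mul x (inv x) = one].

Definition is_subgroup (H : set G) :=
  [/\ H one, forall x y, H x -> H y -> H (mul x y) & forall x, H x -> H (inv x)].

Definition lcoset (g : G) (H : set G) : set G := [set mul g h | h in H].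

Definition lcosets (H : set G) : Type := {C : set G | exists g, C = lcoset g H}.

Definition lcoset_rep (H : set G) (C : lcosets H) : G := projT1 (cid (proj2_sig C)).

(* natural (left translation) action of G on G/H; under the group axioms the
   first branch is always taken *)
Definition lcoset_move (H : set G) (g : G) (C : lcosets H) : lcosets H :=
  match pselect (exists g', lcoset g (proj1_sig C) = lcoset g' H) with
  | left p => exist _ (lcoset g (proj1_sig C)) p
  | right _ => C
  end.

Definition cosets_sum (I : Type) (H : I -> set G) : Type :=
  {i : I & lcosets (H i)}.

Definition cosets_sum_act (I : Type) (H : I -> set G) (g : G)
  (q : cosets_sum H) : cosets_sum H :=
  existT _ (projT1 q) (lcoset_move g (projT2 q)).

Definition is_action (X : Type) (act : G -> X -> X) :=
  (forall x, act one x = x) /\ (forall g1 g2 x, act (mul g1 g2) x = act g1 (act g2 x)).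
End TopGroup.

Definition is_topological_group (G : topologicalType)
  (mul : G -> G -> G) (inv : G -> G) (one : G) :=
  [/\ is_group mul inv one,
      continuous (fun p : G * G => mul p.1 p.2) & continuous inv].

Definition open_subgroup (G : topologicalType)
  (mul : G -> G -> G) (inv : G -> G) (one : G) (H : set G) :=
  is_subgroup mul inv one H /\ open H.

Section Complex.
Variable R : realType.

Definition nsq (z : R[i]) : R := Normc.normc z ^+ 2.

Definition in_S1 (z : R[i]) : Prop := Normc.normc z = 1.

(* continuity of a C-valued map (C carries the product topology of R x R) *)
Definition continuousC (T : topologicalType) (f : T -> R[i]) :=
  continuous (fun t => complex.Re (f t) : R) /\ continuous (fun t => complex.Im (f t) : R).

Definition continuousC_within (T : topologicalType) (A : set T) (f : T -> R[i]) :=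
  {within A, continuous (fun t => complex.Re (f t) : R)} /\
  {within A, continuous (fun t => complex.Im (f t) : R)}.

Definition unitary_character (G : topologicalType) (mul : G -> G -> G)
  (H : set G) (chi : G -> R[i]) :=
  [/\ forall h, H h -> in_S1 (chi h),
      forall h k, H h -> H k -> chi (mul h k) = chi h * chi k &
      continuousC_within H chi].

Definition continuous_action (G : topologicalType) (mul : G -> G -> G) (one : G)
  (X : discreteTopologicalType) (act : G -> X -> X) :=
  is_action mul one act /\ continuous (fun p : G * X => act p.1 p.2).

Definition cocycle (G X : Type) (mul : G -> G -> G) (act : G -> X -> X)
  (c : G -> X -> R[i]) :=
  (forall g x, in_S1 (c g x)) /\
  (forall g1 g2 x, c (mul g1 g2) x = c g1 (act g2 x) * c g2 x).

Definition continuous_cocycle (G : topologicalType) (X : discreteTopologicalType)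
  (mul : G -> G -> G) (act : G -> X -> X) (c : G -> X -> R[i]) :=
  cocycle mul act c /\ continuousC (fun p : G * X => c p.1 p.2).

Definition l2_nsq (X : Type) (f : X -> R[i]) : \bar R :=
  \esum_(x in [set: {classic X}]) (nsq (f x))%:E.

Definition l2_space (X : Type) : set (X -> R[i]) :=
  [set f | (l2_nsq f < +oo)%E].

Definition lambda_rep (G X : Type) (inv : G -> G) (act : G -> X -> X)
  (c : G -> X -> R[i]) (g : G) (f : X -> R[i]) : X -> R[i] :=
  fun x => c (inv g) x * f (act (inv g) x).

(* The Hilbert direct sum (+)_{i in I} Ind_{H_i}^G chi_i is realised as the space
   of functions F on the disjoint union {i : I & G} such that
   F(i, g h) = chi_i(h)^-1 F(i, g) for h in H_i, with
   sum_i sum_{gH_i in G/H_i} |F(i, g)|^2 < oo; G acts by left translation. *)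
Definition ind_space (G : Type) (mul : G -> G -> G) (I : Type) (H : I -> set G)
  (chi : I -> G -> R[i]) : set ({i : I & G} -> R[i]) :=
  [set F | (forall i g h, H i h ->
              F (existT _ i (mul g h)) = (chi i h)^-1 * F (existT _ i g)) /\
           (\esum_(q in [set: {classic cosets_sum mul H}])
              (nsq (F (existT _ (projT1 q) (lcoset_rep (projT2 q)))))%:E < +oo)%E].

Definition ind_nsq (G : Type) (mul : G -> G -> G) (I : Type) (H : I -> set G)
  (F : {i : I & G} -> R[i]) : \bar R :=
  \esum_(q in [set: {classic cosets_sum mul H}])
     (nsq (F (existT _ (projT1 q) (lcoset_rep (projT2 q)))))%:E.

Definition ind_act (G : Type) (mul : G -> G -> G) (inv : G -> G) (I : Type)
  (g : G) (F : {i : I & G} -> R[i]) : {i : I & G} -> R[i] :=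
  fun p => F (existT _ (projT1 p) (mul (inv g) (projT2 p))).

Definition unitarily_equivalent (G T1 T2 : Type)
  (S1 : set (T1 -> R[i])) (N1 : (T1 -> R[i]) -> \bar R)
  (rho1 : G -> (T1 -> R[i]) -> (T1 -> R[i]))
  (S2 : set (T2 -> R[i])) (N2 : (T2 -> R[i]) -> \bar R)
  (rho2 : G -> (T2 -> R[i]) -> (T2 -> R[i])) :=
  exists U : (T1 -> R[i]) -> (T2 -> R[i]),
    [/\ forall v, S1 v -> S2 (U v),
        forall v, S1 v -> N2 (U v) = N1 v,
        forall a v w, S1 v -> S1 w ->
          U (fun t => a * v t + w t) = (fun s => a * U v s + U w s),
        forall w, S2 w -> exists2 v, S1 v & U v = w
      & forall g v, S1 v -> U (rho1 g v) = rho2 g (U v)].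
End Complex.

From HB Require Import structures.
From mathcomp Require Import all_boot all_order all_algebra.
From mathcomp Require Import all_classical all_reals all_analysis.
From mathcomp Require Import complex ring.
Import Order.TTheory GRing.Theory Num.Theory.
Import numFieldNormedType.Exports.
Local Open Scope classical_set_scope.
Local Open Scope ring_scope.
Set Implicit Arguments. Unset Strict Implicit. Unset Printing Implicit Defensive.

(* (i) Pick a point x_i in each G-orbit of X. Its stabiliser H_i is open because
   the action is continuous and X is discrete, and the cocycle identity makes
   h |-> c(h, x_i)^-1 a unitary character chi_i of H_i. As the orbit of x_i is
   G/H_i, the map f |-> ((i, g) |-> c(g, x_i) f(g x_i)) is a G-equivariant
   isometry of l2(X) onto the sum of the Ind chi_i.
   (ii) Conversely, fix a representative r(C) of every coset C in
   X = coprod_i G/H_i. Evaluation at these representatives identifies the sum of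
   the Ind chi_i with l2(X), and transports left translation to lambda_X^c for
   c(g, C) = chi_i(r(gC)^-1 g r(C))^-1. *)

Section Group.
Variables (G : Type) (mul : G -> G -> G) (inv : G -> G) (one : G).
Hypothesis Hg : is_group mul inv one.

Lemma grp_mulA x y z : mul x (mul y z) = mul (mul x y) z. Proof. by case: Hg. Qed.
Lemma grp_mul1g x : mul one x = x. Proof. by case: Hg. Qed.
Lemma grp_mulg1 x : mul x one = x. Proof. by case: Hg. Qed.
Lemma grp_mulVg x : mul (inv x) x = one. Proof. by case: Hg. Qed.
Lemma grp_mulgV x : mul x (inv x) = one. Proof. by case: Hg. Qed.

Lemma grp_mulKg x y : mul (inv x) (mul x y) = y.
Proof. by rewrite grp_mulA grp_mulVg grp_mul1g. Qed.

Lemma grp_mulKVg x y : mul x (mul (inv x) y) = y.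
Proof. by rewrite grp_mulA grp_mulgV grp_mul1g. Qed.

Lemma grp_inv_unique x y : mul x y = one -> inv x = y.
Proof. by move=> xy1; rewrite -[inv x]grp_mulg1 -xy1 grp_mulA grp_mulVg grp_mul1g. Qed.

Lemma grp_invMg x y : inv (mul x y) = mul (inv y) (inv x).
Proof.
apply: grp_inv_unique.
by rewrite grp_mulA -[mul (mul x y) _]grp_mulA grp_mulgV grp_mulg1 grp_mulgV.
Qed.

Lemma grp_invgK x : inv (inv x) = x.
Proof. by apply: grp_inv_unique; rewrite grp_mulVg. Qed.

Variable H : set G.
Hypothesis HH : is_subgroup mul inv one H.

Lemma subgroup1 : H one. Proof. by case: HH. Qed.
Lemma subgroupM x y : H x -> H y -> H (mul x y). Proof. by case: HH => _ + _; apply. Qed.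
Lemma subgroupV x : H x -> H (inv x). Proof. by case: HH => _ _; apply. Qed.

Lemma mem_lcoset g x : lcoset mul g H x <-> H (mul (inv g) x).
Proof.
split=> [[h Hh <-]|Hx]; first by rewrite grp_mulKg.
by exists (mul (inv g) x); rewrite ?grp_mulKVg.
Qed.

Lemma lcoset_self g : lcoset mul g H g.
Proof. by apply/mem_lcoset; rewrite grp_mulVg; exact: subgroup1. Qed.

Lemma eq_lcoset a b : lcoset mul a H = lcoset mul b H <-> H (mul (inv a) b).
Proof.
split=> [ab|Hab]; first by apply/mem_lcoset; rewrite ab; exact: lcoset_self.
have Hba : H (mul (inv b) a) by rewrite -[a]grp_invgK -grp_invMg; exact: subgroupV.
apply/seteqP; split=> x /mem_lcoset Hx; apply/mem_lcoset.
  by rewrite -(grp_mulKVg a x) grp_mulA; apply: subgroupM.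
by rewrite -(grp_mulKVg b x) grp_mulA; apply: subgroupM.
Qed.

Lemma lcosetM g g' : lcoset mul g (lcoset mul g' H) = lcoset mul (mul g g') H.
Proof.
apply/seteqP; split=> x.
  by case=> _ [h Hh <-] <-; exists h; rewrite ?grp_mulA.
by case=> h Hh <-; exists (mul g' h); [exists h|rewrite grp_mulA].
Qed.

Lemma lcoset_val_inj : injective (@proj1_sig _ _ : lcosets mul H -> set G).
Proof. by move=> [C pC] [C' pC'] /= CC'; exact: eq_exist. Qed.

Definition lcoset_of (g : G) : lcosets mul H :=
  exist _ (lcoset mul g H) (ex_intro _ g erefl).

Lemma lcoset_repP (C : lcosets mul H) : proj1_sig C = lcoset mul (lcoset_rep C) H.
Proof. by rewrite /lcoset_rep; case: cid. Qed.

Lemma lcoset_of_rep (C : lcosets mul H) : lcoset_of (lcoset_rep C) = C.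
Proof. by apply: lcoset_val_inj; rewrite /= -lcoset_repP. Qed.

Lemma lcoset_of_eq g h : H h -> lcoset_of (mul g h) = lcoset_of g.
Proof.
move=> Hh; apply: lcoset_val_inj; apply/eq_lcoset.
by rewrite grp_invMg -grp_mulA grp_mulVg grp_mulg1; exact: subgroupV.
Qed.

Lemma lcoset_rep_mem (C : lcosets mul H) g :
  proj1_sig C g -> H (mul (inv (lcoset_rep C)) g).
Proof. by rewrite lcoset_repP => /mem_lcoset. Qed.

Lemma lcoset_rep_of g : H (mul (inv g) (lcoset_rep (lcoset_of g))).
Proof. by apply/eq_lcoset; rewrite -lcoset_repP. Qed.

Lemma lcoset_move_val g (C : lcosets mul H) :
  proj1_sig (lcoset_move g C) = lcoset mul g (proj1_sig C).
Proof.
rewrite /lcoset_move; case: pselect => //= -[].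
by exists (mul g (lcoset_rep C)); rewrite lcoset_repP lcosetM.
Qed.

Lemma lcoset_move1 (C : lcosets mul H) : lcoset_move one C = C.
Proof. by apply: lcoset_val_inj; rewrite lcoset_move_val lcoset_repP lcosetM grp_mul1g. Qed.

Lemma lcoset_moveM g1 g2 (C : lcosets mul H) :
  lcoset_move (mul g1 g2) C = lcoset_move g1 (lcoset_move g2 C).
Proof.
by apply: lcoset_val_inj; rewrite !lcoset_move_val lcoset_repP !lcosetM grp_mulA.
Qed.

(* The factor by which the chosen representatives fail to be G-equivariant. *)
Lemma lcoset_rep_move g (C : lcosets mul H) :
  H (mul (inv (lcoset_rep (lcoset_move g C))) (mul g (lcoset_rep C))).
Proof.
apply: lcoset_rep_mem; rewrite lcoset_move_val.
by exists (lcoset_rep C) => //; rewrite lcoset_repP; exact: lcoset_self.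
Qed.
End Group.

Section UnitCircle.
Variable R : realType.
Implicit Types z w : R[i].

Lemma S1_neq0 z : in_S1 z -> z != 0.
Proof.
move=> z1; apply/eqP => z0; move: z1.
by rewrite /in_S1 z0 Normc.normc0 => /eqP; rewrite eq_sym oner_eq0.
Qed.

Lemma S1V z : in_S1 z -> in_S1 z^-1.
Proof. by rewrite /in_S1 Normc.normcV => ->; rewrite invr1. Qed.

Lemma nsq_mulS1 z w : in_S1 z -> nsq (z * w) = nsq w.
Proof. by rewrite /nsq Normc.normcM => ->; rewrite mul1r. Qed.

Lemma S1_conjV z : in_S1 z -> (z^*)%C = z^-1.
Proof.
move=> z1; have z_neq0 := S1_neq0 z1.
apply: (mulfI z_neq0); rewrite divrr ?unitfE //.
move: z1; rewrite /in_S1; case: z z_neq0 => a b _ /= ab1.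
have sq1 : a ^+ 2 + b ^+ 2 = 1.
  by rewrite -(@sqr_sqrtr _ (a ^+ 2 + b ^+ 2)) ?ab1 ?expr1n // addr_ge0 // sqr_ge0.
by apply/eqP; rewrite eq_complex /= -sq1; apply/andP; split; apply/eqP; ring.
Qed.

Lemma S1_conj z : in_S1 z -> in_S1 (z^*)%C.
Proof. by move=> z1; rewrite S1_conjV //; exact: S1V. Qed.
End UnitCircle.

Lemma xget_dflt_irrelevant (T : choiceType) (a b : T) (P : set T) :
  (exists x, P x) -> xget a P = xget b P.
Proof.
move=> [x Px]; rewrite /xget; case: pselect => // noP.
by exfalso; apply: noP; exists x; exact/asboolP.
Qed.

Section Orbits.
Variables (G : Type) (mul : G -> G -> G) (inv : G -> G) (one : G).
Hypothesis Hg : is_group mul inv one.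
Variables (X : choiceType) (act : G -> X -> X).
Hypothesis Hact : is_action mul one act.

Lemma act1 x : act one x = x. Proof. by case: Hact. Qed.
Lemma actM g h x : act (mul g h) x = act g (act h x). Proof. by case: Hact. Qed.
Lemma actK g x : act (inv g) (act g x) = x.
Proof. by rewrite -actM (grp_mulVg Hg) act1. Qed.

Definition act_orbit (x : X) : set X := [set y | exists g, act g x = y].

Lemma act_orbit_refl x : act_orbit x x. Proof. by exists one; rewrite act1. Qed.

Lemma act_orbit_eq x y : act_orbit x y -> act_orbit y = act_orbit x.
Proof.
case=> g <-; apply/seteqP; split=> z [h <-].
  by exists (mul h g); rewrite actM.
by exists (mul h (inv g)); rewrite actM actK.
Qed.

Definition orbit_rep (x : X) : X := xget x (act_orbit x).

Lemma orbit_rep_in x : act_orbit x (orbit_rep x).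
Proof. exact: xgetI (act_orbit_refl x). Qed.

Lemma orbit_rep_eq x y : act_orbit x y -> orbit_rep y = orbit_rep x.
Proof.
move=> xy; rewrite /orbit_rep (act_orbit_eq xy).
by apply: xget_dflt_irrelevant; exists x; exact: act_orbit_refl.
Qed.

Lemma orbit_repK x : orbit_rep (orbit_rep x) = orbit_rep x.
Proof. exact: orbit_rep_eq (orbit_rep_in x). Qed.

Definition orbit_reps := {x : X | orbit_rep x = x}.

Definition orbit_index (x : X) : orbit_reps := exist _ (orbit_rep x) (orbit_repK x).

Lemma orbit_indexE (i : orbit_reps) x : orbit_rep x = proj1_sig i -> orbit_index x = i.
Proof. by case: i => y py /= xy; exact: eq_exist. Qed.

Lemma orbit_rep_act (i : orbit_reps) g : orbit_rep (act g (proj1_sig i)) = proj1_sig i.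
Proof. by rewrite (@orbit_rep_eq (proj1_sig i)); [exact: proj2_sig i | exists g]. Qed.

Definition transporter (x : X) : G := inv (projT1 (cid (orbit_rep_in x))).

Lemma transporterP x : act (transporter x) (orbit_rep x) = x.
Proof. by rewrite /transporter; case: cid => g /= <-; rewrite actK. Qed.

Definition stab (i : orbit_reps) : set G :=
  [set g | act g (proj1_sig i) = proj1_sig i].

Lemma stab_subgroup i : is_subgroup mul inv one (stab i).
Proof.
split=> [|g h gi hi|g gi]; rewrite /stab /=; first exact: act1.
  by rewrite actM hi gi.
by rewrite -{1}gi actK.
Qed.

(* X is the disjoint union of the orbits G x_i = G/H_i. *)
Definition orbit_point (q : cosets_sum mul stab) : X :=
  act (lcoset_rep (projT2 q)) (proj1_sig (projT1 q)).

Definition orbit_coset (x : X) : cosets_sum mul stab :=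
  existT _ (orbit_index x) (lcoset_of mul (stab (orbit_index x)) (transporter x)).

Lemma orbit_cosetK : cancel orbit_coset orbit_point.
Proof.
move=> x; rewrite /orbit_point /=.
have := lcoset_rep_of Hg (stab_subgroup (orbit_index x)) (transporter x).
set s := lcoset_rep _; rewrite /stab /= => stab_s.
by rewrite -(grp_mulKVg Hg (transporter x) s) actM stab_s transporterP.
Qed.

Lemma orbit_pointK : cancel orbit_point orbit_coset.
Proof.
case=> i C; rewrite /orbit_coset /orbit_point /=.
set s := lcoset_rep C; set y := act s (proj1_sig i).
have ry : orbit_rep y = proj1_sig i by exact: orbit_rep_act.
rewrite (orbit_indexE ry); congr existT; apply: lcoset_val_inj => /=.
rewrite (lcoset_repP C); apply/(eq_lcoset Hg (stab_subgroup i)).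
rewrite /stab /= actM -/s -/y -ry.
by rewrite -[w in act _ w](transporterP y) actK.
Qed.

Section TwistedPermutation.
Variables (R : realType) (c : G -> X -> R[i]).
Hypothesis Hc : cocycle mul act c.

Lemma cocycle_S1 g x : in_S1 (c g x). Proof. by case: Hc. Qed.
Lemma cocycleM g h x : c (mul g h) x = c g (act h x) * c h x. Proof. by case: Hc. Qed.

(* On S^1, conj is inversion; conj is used because it is visibly continuous. *)
Definition stab_char (i : orbit_reps) (h : G) : R[i] := ((c h (proj1_sig i))^*)%C.

Lemma stab_charM i h k : stab i k -> stab_char i (mul h k) = stab_char i h * stab_char i k.
Proof. by move=> ik; rewrite /stab_char cocycleM ik rmorphM. Qed.

Definition ind_of_l2 (f : X -> R[i]) : {i : orbit_reps & G} -> R[i] :=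
  fun p => c (projT2 p) (proj1_sig (projT1 p)) * f (act (projT2 p) (proj1_sig (projT1 p))).

Definition l2_of_ind (F : {i : orbit_reps & G} -> R[i]) (x : X) : R[i] :=
  ((c (transporter x) (orbit_rep x))^*)%C * F (existT _ (orbit_index x) (transporter x)).

Lemma ind_of_l2_nsq f : @ind_nsq R G mul _ stab (ind_of_l2 f) = @l2_nsq R X f.
Proof.
rewrite /ind_nsq /l2_nsq.
transitivity (\esum_(q in [set: {classic cosets_sum mul stab}])
                (nsq (f (orbit_point q)))%:E).
  by apply: eq_esum => q _; rewrite /ind_of_l2 nsq_mulS1 //; exact: cocycle_S1.
symmetry; apply: reindex_esum; rewrite setTT_bijective.
by exists orbit_coset; [exact: orbit_pointK | exact: orbit_cosetK].
Qed.

Lemma ind_of_l2_equiv f i g h : stab i h ->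
  ind_of_l2 f (existT _ i (mul g h)) = (stab_char i h)^-1 * ind_of_l2 f (existT _ i g).
Proof.
rewrite /stab /ind_of_l2 /stab_char /= => ih.
by rewrite cocycleM actM ih (S1_conjV (cocycle_S1 h _)) invrK; ring.
Qed.

Lemma ind_of_l2_ind f : l2_space f -> ind_space mul stab stab_char (ind_of_l2 f).
Proof.
move=> f_l2; split=> [i g h|]; first exact: ind_of_l2_equiv.
by move: (ind_of_l2_nsq f); rewrite /ind_nsq => ->.
Qed.

Lemma ind_of_l2_lambda g f :
  ind_of_l2 (lambda_rep inv act c g f) = ind_act mul inv g (ind_of_l2 f).
Proof.
apply: funext => -[i y]; rewrite /ind_of_l2 /lambda_rep /ind_act /=.
by rewrite cocycleM actM; ring.
Qed.

Lemma l2_of_indK F : ind_space mul stab stab_char F -> ind_of_l2 (l2_of_ind F) = F.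
Proof.
case=> F_equiv _; apply: funext => -[i y]; rewrite /ind_of_l2 /l2_of_ind /=.
set z := act y (proj1_sig i); set t := transporter z.
have rz : orbit_rep z = proj1_sig i by exact: orbit_rep_act.
rewrite (orbit_indexE rz) rz.
set k := mul (inv t) y.
have tz : act t (proj1_sig i) = z by rewrite -rz transporterP.
have ik : stab i k by rewrite /stab /= /k actM -/z -[w in act _ w]tz actK.
have := F_equiv i t k ik; have := cocycleM t k (proj1_sig i).
rewrite /k (grp_mulKVg Hg) ik => -> ->.
rewrite /stab_char (S1_conjV (cocycle_S1 k _)) (S1_conjV (cocycle_S1 t _)) invrK.
have := S1_neq0 (cocycle_S1 t (proj1_sig i)).
by move=> ?; field.
Qed.

Lemma l2_of_ind_l2 F : ind_space mul stab stab_char F -> l2_space (l2_of_ind F).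
Proof. by move=> F_ind; rewrite /l2_space /= -ind_of_l2_nsq l2_of_indK //; case: F_ind. Qed.

Lemma lambda_rep_equiv_ind :
  unitarily_equivalent (@l2_space R X) (@l2_nsq R X) (lambda_rep inv act c)
    (ind_space mul stab stab_char) (@ind_nsq R G mul _ stab) (@ind_act R G mul inv _).
Proof.
exists ind_of_l2; split=> [v|v _|a v w _ _|w w_ind|g v _].
- exact: ind_of_l2_ind.
- exact: ind_of_l2_nsq.
- by apply: funext => p; rewrite /ind_of_l2 /=; ring.
- by exists (l2_of_ind w); [exact: l2_of_ind_l2 | exact: l2_of_indK].
- exact: ind_of_l2_lambda.
Qed.
End TwistedPermutation.
End Orbits.

Section Continuity.
Variables (R : realType) (G : topologicalType) (X : discreteTopologicalType).

Lemma continuous_slice (T : topologicalType) (F : G * X -> T) x :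
  continuous F -> continuous (fun g => F (g, x)).
Proof.
move=> F_cont g; apply: continuous_comp (F_cont _).
by apply: cvg_pair => //; exact: cvg_cst.
Qed.

Lemma open_stabilizer (act : G -> X -> X) x :
  continuous (fun p : G * X => act p.1 p.2) -> open [set g | act g x = x].
Proof.
move=> act_cont; rewrite (_ : [set g | _] = (fun g => act g x) @^-1` [set x]) //.
apply: open_comp => [g _|]; last exact: discrete_open.
exact: (continuous_slice (F := fun p : G * X => act p.1 p.2)).
Qed.

Lemma continuousC_within_conj (A : set G) (f : G -> R[i]) :
  continuous (fun g => complex.Re (f g)) -> continuous (fun g => complex.Im (f g)) ->
  continuousC_within A (fun g => (f g)^*%C).
Proof.
move=> Re_cont Im_cont; split; apply: continuous_subspaceT => g.
  rewrite (_ : (fun t => _) = fun t => complex.Re (f t)) //.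
  by apply: funext => t; case: (f t).
rewrite (_ : (fun t => _) = fun t => - complex.Im (f t)); first exact: continuousN (Im_cont g).
by apply: funext => t; case: (f t).
Qed.
End Continuity.

Lemma stab_char_unitary (G : topologicalType) (mul : G -> G -> G) (inv : G -> G) (one : G)
    (R : realType) (X : discreteTopologicalType) (act : G -> X -> X) (c : G -> X -> R[i]) :
  is_group mul inv one -> is_action mul one act -> continuous_cocycle mul act c ->
  forall i, unitary_character mul (@stab _ _ act i) (stab_char c i).
Proof.
move=> Hg Hact [Hc [Re_cont Im_cont]] i; split=> [h _|h k _ ik|].
- exact/S1_conj/(cocycle_S1 Hc).
- exact: (stab_charM Hc).
- apply: continuousC_within_conj.
    exact: (continuous_slice (F := fun p : G * X => complex.Re (c p.1 p.2))).
  exact: (continuous_slice (F := fun p : G * X => complex.Im (c p.1 p.2))).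
Qed.

Section MonomialSum.
Variables (R : realType) (G : Type) (mul : G -> G -> G) (inv : G -> G) (one : G).
Hypothesis Hg : is_group mul inv one.
Variables (I : Type) (H : I -> set G) (chi : I -> G -> R[i]).
Hypothesis HH : forall i, is_subgroup mul inv one (H i).
Hypothesis chi_S1 : forall i h, H i h -> in_S1 (chi i h).
Hypothesis chiM : forall i h k, H i h -> H i k -> chi i (mul h k) = chi i h * chi i k.

Local Notation X := (cosets_sum mul H).
Local Notation act := (@cosets_sum_act G mul I H).

Lemma chi1 i : chi i one = 1.
Proof.
have H1 := subgroup1 (HH i).
apply: (mulfI (S1_neq0 (chi_S1 H1))).
by rewrite mulr1 -chiM // (grp_mul1g Hg).
Qed.

Definition cosets_sum_rep (q : X) : G := lcoset_rep (projT2 q).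

Definition monomial_cocycle (g : G) (q : X) : R[i] :=
  (chi (projT1 q) (mul (inv (cosets_sum_rep (act g q))) (mul g (cosets_sum_rep q))))^-1.

Lemma monomial_cocycleP : cocycle mul act monomial_cocycle.
Proof.
split=> [g [i C]|g1 g2 [i C]].
  exact/S1V/chi_S1/(lcoset_rep_move Hg (HH i)).
rewrite /monomial_cocycle /cosets_sum_rep /= -invfM -chiM; try exact: (lcoset_rep_move Hg (HH i)).
by rewrite (lcoset_moveM Hg) -!(grp_mulA Hg) (grp_mulKVg Hg).
Qed.

Definition eval_at_reps (F : {i : I & G} -> R[i]) (q : X) : R[i] :=
  F (existT _ (projT1 q) (cosets_sum_rep q)).

Definition extend_from_reps (f : X -> R[i]) (p : {i : I & G}) : R[i] :=
  let C := lcoset_of mul (H (projT1 p)) (projT2 p) in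
  (chi (projT1 p) (mul (inv (lcoset_rep C)) (projT2 p)))^-1 * f (existT _ (projT1 p) C).

Lemma extend_from_reps_rep f q :
  extend_from_reps f (existT _ (projT1 q) (cosets_sum_rep q)) = f q.
Proof.
case: q => i C; rewrite /extend_from_reps /cosets_sum_rep /=.
by rewrite lcoset_of_rep (grp_mulVg Hg) chi1 invr1 mul1r.
Qed.

Lemma extend_from_repsK f : eval_at_reps (extend_from_reps f) = f.
Proof. by apply: funext => q; exact: extend_from_reps_rep. Qed.

Lemma extend_from_reps_equiv f i g h : H i h ->
  extend_from_reps f (existT _ i (mul g h)) = (chi i h)^-1 * extend_from_reps f (existT _ i g).
Proof.
move=> Hh; rewrite /extend_from_reps /= (lcoset_of_eq Hg (HH i) g Hh).
have Hr : H i (mul (inv (lcoset_rep (lcoset_of mul (H i) g))) g).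
  by apply: (lcoset_rep_mem Hg); exact: (lcoset_self Hg (HH i)).
by rewrite (grp_mulA Hg) chiM // invfM; ring.
Qed.

Lemma extend_from_reps_ind f : l2_space f -> ind_space mul H chi (extend_from_reps f).
Proof.
move=> f_l2; split=> [i g h|]; first exact: extend_from_reps_equiv.
rewrite (_ : \esum_(q in _) _ = l2_nsq f) //.
by apply: eq_esum => q _; rewrite extend_from_reps_rep.
Qed.

Lemma eval_at_reps_ind_act F g : ind_space mul H chi F ->
  eval_at_reps (ind_act mul inv g F) = lambda_rep inv act monomial_cocycle g (eval_at_reps F).
Proof.
case=> F_equiv _; apply: funext => -[i C].
rewrite /eval_at_reps /ind_act /lambda_rep /monomial_cocycle /cosets_sum_rep /=.
have := F_equiv i (lcoset_rep (lcoset_move (inv g) C)) _ (lcoset_rep_move Hg (HH i) (inv g) C).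
by rewrite (grp_mulKVg Hg).
Qed.

Lemma ind_equiv_lambda_rep :
  unitarily_equivalent (ind_space mul H chi) (@ind_nsq R G mul I H) (@ind_act R G mul inv I)
    (@l2_space R X) (@l2_nsq R X) (lambda_rep inv act monomial_cocycle).
Proof.
exists eval_at_reps; split=> [v [_ v_l2]|//|//|w w_l2|g v v_ind].
- exact: v_l2.
- by exists (extend_from_reps w); [exact: extend_from_reps_ind | exact: extend_from_repsK].
- exact: eval_at_reps_ind_act.
Qed.
End MonomialSum.

Theorem corollary2p3 (R : realType) (G : topologicalType)
  (mul : G -> G -> G) (inv : G -> G) (one : G) :
  is_topological_group mul inv one ->
  (* (i) *)
  (forall (X : discreteTopologicalType) (act : G -> X -> X) (c : G -> X -> R[i]),
     continuous_action mul one act ->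
     continuous_cocycle mul act c ->
     exists (I : Type) (H : I -> set G) (chi : I -> G -> R[i]),
       [/\ forall i, open_subgroup mul inv one (H i),
           forall i, unitary_character mul (H i) (chi i) &
           unitarily_equivalent
             (@l2_space R X) (@l2_nsq R X) (lambda_rep inv act c)
             (ind_space mul H chi) (@ind_nsq R G mul I H) (@ind_act R G mul inv I)]) /\
  (* (ii) *)
  (forall (I : Type) (H : I -> set G) (chi : I -> G -> R[i]),
     (forall i, open_subgroup mul inv one (H i)) ->
     (forall i, unitary_character mul (H i) (chi i)) ->
     exists c : G -> cosets_sum mul H -> R[i],
       cocycle mul (@cosets_sum_act G mul I H) c /\
       unitarily_equivalent
         (ind_space mul H chi) (@ind_nsq R G mul I H) (@ind_act R G mul inv I)
         (@l2_space R (cosets_sum mul H)) (@l2_nsq R (cosets_sum mul H))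
         (lambda_rep inv (@cosets_sum_act G mul I H) c)).
Proof.
case=> Hg _ _; split=> [X act c [Hact act_cont] Hc | I H chi H_open chi_unitary].
  exists (orbit_reps act), (@stab _ _ act), (stab_char c); split=> [i||].
  - by split; [exact: (stab_subgroup Hg Hact i) | exact: open_stabilizer act_cont].
  - exact: stab_char_unitary Hg Hact Hc.
  - exact: (lambda_rep_equiv_ind Hg Hact Hc.1).
have HH i := (H_open i).1.
have chi_S1 i h : H i h -> in_S1 (chi i h) by case: (chi_unitary i) => + _ _; apply.
have chiM i h k : H i h -> H i k -> chi i (mul h k) = chi i h * chi i k.
  by case: (chi_unitary i) => _ + _; apply.
exists (monomial_cocycle inv chi); split.
- exact: (monomial_cocycleP Hg HH chi_S1 chiM).
- exact: (ind_equiv_lambda_rep Hg HH chi_S1 chiM).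
Qed.
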